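(* If $q>0$ is an equilibrium price of the TWDPP mechanism, then $\mathrm{Welfare}(\vec x(q))\ge\frac{\mathrm{OPT}}{2(1+\delta)}\min\{1,\delta\}$.
   Context: Dynamic posted-price setting: at each time step a block with $m$ slots is produced; $n$ bidders arrive with values $v_1,\dots,v_n$ drawn i.i.d. from a distribution $F$, each participating once and bidding truthfully. Given posted price $q>0$, $M(q)=\{i:v_i\ge q\}$, $N(q)=|M(q)|$. TWDPP: $B$ is chosen uniformly at random among subsets of $M(q)$ of size $\min\{m,N(q)\}$; $x_i(q)=1$ if $i\in B$ (and $i$ pays $q$), else $0$; the next price is $T_{TW}(q,B)=\alpha\frac1m\sum_{i\in B}\min\{b_i,(1+\delta)q\}+(1-\alpha)q$ if $|B|<m$ and $\alpha(1+\delta)q+(1-\alpha)q$ if $|B|=m$, with $\alpha\in(0,1)$, $\delta\in(0,\infty)$. An equilibrium price is a price $q$ with $\mathbb{E}[T_{TW}(q,B)]=q$, expectation over values and the random allocation. $\mathrm{Welfare}(\vec x(q))=\mathbb{E}[\sum_i v_i x_i(q)]$, and $\mathrm{OPT}$ is the expected sum of the $\min\{m,n\}$ largest values. *)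

From HB Require Import structures.
From mathcomp Require Import all_boot all_order all_algebra.
From mathcomp Require Import all_classical all_reals all_analysis.
Set Implicit Arguments. Unset Strict Implicit. Unset Printing Implicit Defensive.
Import Order.TTheory GRing.Theory Num.Theory.
Local Open Scope classical_set_scope.
Local Open Scope ring_scope.

Section TWDPP.
Variable R : realType.

Definition Mset n (v : 'I_n -> R) (q : R) : {set 'I_n} := [set i | q <= v i].

(* the support of the uniform random block B: subsets of M(q) of size min{m, N(q)} *)
Definition blocks n (m : nat) (v : 'I_n -> R) (q : R) : {set {set 'I_n}} :=
  [set B : {set 'I_n} | (B \subset Mset v q) && (#|B| == minn m #|Mset v q|)].

(* expectation over the uniform random allocation B (values v fixed) *)
Definition avgB n (m : nat) (v : 'I_n -> R) (q : R) (g : {set 'I_n} -> R) : R :=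
  (\sum_(B in blocks m v q) g B) / (#|blocks m v q|)%:R.

(* next price T_TW(q, B); bids are truthful, b_i = v_i *)
Definition T_TW n (m : nat) (alpha delta : R) (v : 'I_n -> R) (q : R)
  (B : {set 'I_n}) : R :=
  if (#|B| < m)%N then
    alpha * (m%:R^-1 * \sum_(i in B) Num.min (v i) ((1 + delta) * q)) + (1 - alpha) * q
  else alpha * ((1 + delta) * q) + (1 - alpha) * q.

Definition welfare_of n (v : 'I_n -> R) (B : {set 'I_n}) : R := \sum_(i in B) v i.

Definition top_sum n (m : nat) (v : 'I_n -> R) : R :=
  \sum_(x <- take (minn m n) (sort (fun a b : R => b <= a) [seq v i | i <- enum 'I_n])) x.

Definition iid_with {d} {T : measurableType d} (P : probability T R) n
  (X : 'I_n -> T -> R) (F : probability R R) : Prop :=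
  (forall i, measurable_fun setT (X i)) /\
  forall A : 'I_n -> set R, (forall i, measurable (A i)) ->
    P (\bigcap_(i in [set: 'I_n]) (X i @^-1` A i)) = (\prod_(i < n) F (A i))%E.

End TWDPP.

From HB Require Import structures.
From mathcomp Require Import all_boot all_order all_algebra.
From mathcomp Require Import all_classical all_reals all_analysis.
From mathcomp Require Import measurable_realfun.
From mathcomp Require Import ring lra zify.
Import Order.TTheory GRing.Theory Num.Theory.
Local Open Scope classical_set_scope.
Local Open Scope ring_scope.

(* Write N = |M(q)| and (x - q)^+ for the surplus of a value over the price.  For fixed
   values every block sells min(m, N) items at price at least q, and bidder i is served
   for sure when M(q) \ {i} alone cannot fill the block; taking expectations,
     Welfare >= q E[min(m, N)] + sum_i E[(v_i - q)^+ ; |M(q) \ {i}| < m],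
   while OPT <= m q + sum_i E[(v_i - q)^+].  As v_i is independent of M(q) \ {i}, the
   i-th term of the first sum is P(|M(q) \ {i}| < m) E_F[(x - q)^+].  Bounding T_TW
   above by (1 - alpha) q + alpha (1 + delta) q min(m, N) / m and below by
   (1 - alpha) q + alpha (1 + delta) q [N >= m], the equilibrium condition gives
   E[min(m, N)] >= m / (1 + delta) and P(N >= m) <= 1 / (1 + delta), hence
   P(|M(q) \ {i}| < m) >= delta / (1 + delta).  Comparing term by term yields the ratio
   min(1, delta) / (1 + delta), twice the one claimed. *)

Lemma in_setb {U : Type} (b : U -> bool) x : (x \in [set y | b y]) = b x.
Proof. exact: asboolb. Qed.

Section integral_facts.
Local Open Scope ereal_scope.
Context {d : measure_display} {T : measurableType d} {R : realType}.

(* The integral is a difference of suprema over simple functions below f^\+ and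
   f^\-, so it is monotone even for non-measurable integrands. *)
Lemma le_integral_pointwise (mu : {measure set T -> \bar R}) (f g : T -> \bar R) :
  (forall x, f x <= g x) -> \int[mu]_x f x <= \int[mu]_x g x.
Proof.
move=> fg; rewrite (integralE _ _ f) (integralE _ _ g).
have fgp := @funepos_le _ _ setT f g (fun x _ => fg x).
have fgn := @funeneg_le _ _ setT f g (fun x _ => fg x).
rewrite !ge0_integralTE => [|x|x|x|x]; try exact: funepos_ge0; try exact: funeneg_ge0.
apply: leeB; apply: ereal_sup_le => _ [h hf <-]; exists h => //= x.
- by apply: le_trans (hf x) _; apply: fgp; rewrite inE.
- by apply: le_trans (hf x) _; apply: fgn; rewrite inE.
Qed.

Lemma integral_affine (P : probability T R) (a b : R) (g : T -> R) :
  (0 <= a)%R -> (0 <= b)%R -> (forall w, 0 <= g w)%R -> measurable_fun setT g ->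
  \int[P]_w (a + b * g w)%:E = a%:E + b%:E * \int[P]_w (g w)%:E.
Proof.
move=> a0 b0 g0 mg.
under eq_integral do rewrite EFinD EFinM.
rewrite ge0_integralD //; last 2 first.
- by move=> w _; rewrite -EFinM lee_fin mulr_ge0.
- by apply/measurable_EFinP; apply: measurable_funM.
rewrite integral_cst // [X in _ * X]probability_setT mule1 ge0_integralZl_EFin //.
- by move=> w _; rewrite lee_fin.
- exact/measurable_EFinP.
Qed.

Lemma ge0_integralD_sum (mu : {measure set T -> \bar R}) (I : Type) (s : seq I)
    (f : T -> R) (g : I -> T -> R) :
  (forall w, 0 <= f w)%R -> measurable_fun setT f ->
  (forall i w, 0 <= g i w)%R -> (forall i, measurable_fun setT (g i)) ->
  \int[mu]_w (f w + \sum_(i <- s) g i w)%:E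
    = \int[mu]_w (f w)%:E + \sum_(i <- s) \int[mu]_w (g i w)%:E.
Proof.
move=> f0 mf g0 mg; under eq_integral do rewrite EFinD -sumEFin.
rewrite ge0_integralD //.
- by rewrite ge0_integral_sum // => [i|i w _]; [exact/measurable_EFinP | rewrite lee_fin].
- by move=> w _; rewrite lee_fin.
- exact/measurable_EFinP.
- by move=> w _; rewrite sume_ge0 // => i _; rewrite lee_fin.
- by apply: emeasurable_sum => i; exact/measurable_EFinP.
Qed.

Lemma integral_indep (P : probability T R) (F : probability R R) (Y : T -> R)
    (G : set T) (f : R -> \bar R) :
  measurable_fun setT Y -> measurable G -> measurable_fun setT f ->
  (forall x, 0 <= f x) ->
  (forall A, measurable A -> P (Y @^-1` A `&` G) = F A * P G) ->
  \int[P]_(x in G) f (Y x) = P G * \int[F]_x f x.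
Proof.
move=> mY mG mf f0 indepYG.
rewrite (eq_measure_integral (mrestr P mG)); last first.
  by move=> A mA AG; rewrite -[RHS]/(P (A `&` G)) setIidl.
have mfY : measurable_fun setT (f \o Y) by exact: measurableT_comp.
have -> : \int[mrestr P mG]_(x in G) f (Y x) = \int[mrestr P mG]_x f (Y x).
  rewrite -(setUv G) (ge0_integral_setU _ mG (measurableC mG)); first last.
  - by rewrite disj_set2E setICr.
  - by move=> x _; exact: f0.
  - by rewrite setUv.
  rewrite (null_set_integral (measurableC mG)) ?adde0 //.
  - exact: measurable_funS mfY.
  - by rewrite -[LHS]/(P (~` G `&` G)) setICl measure0.
rewrite -(preimage_setT Y) -ge0_integral_pushforward //.
have PG0 : (0 <= fine (P G))%R by rewrite fine_ge0.
rewrite (eq_measure_integral (mscale (NngNum PG0) F)); last first.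
  move=> A mA _; rewrite -[LHS]/(P (Y @^-1` A `&` G)) indepYG // muleC.
  by rewrite -[RHS]/((fine (P G))%:E * F A) fineK ?fin_num_measure.
by rewrite ge0_integral_mscale //= fineK ?fin_num_measure.
Qed.

End integral_facts.

Definition excess {R : numDomainType} (q x : R) : R := Num.max (x - q) 0.

Lemma excess_ge0 {R : realDomainType} (q x : R) : 0 <= excess q x.
Proof. by rewrite le_max lexx orbT. Qed.

Lemma le_add_excess {R : realDomainType} (q x : R) : x <= q + excess q x.
Proof. by rewrite -lerBlDl le_max lexx. Qed.

Lemma add_excess {R : realDomainType} (q x : R) : q <= x -> q + excess q x = x.
Proof. by move=> qx; rewrite /excess max_l ?subr_ge0 // addrC subrK. Qed.

Lemma excess_eq0 {R : realDomainType} (q x : R) : x < q -> excess q x = 0.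
Proof. by move=> xq; rewrite /excess max_r // subr_le0 ltW. Qed.

Lemma measurable_excess {R : realType} (q : R) : measurable_fun setT (excess q).
Proof. by apply: measurable_maxr => //; exact: measurable_funB. Qed.

Definition mean_excess {R : realType} (F : probability R R) (q : R) : \bar R :=
  \int[F]_x (excess q x)%:E.

Lemma mean_excess_ge0 {R : realType} (F : probability R R) (q : R) :
  (0 <= mean_excess F q)%E.
Proof. by apply: integral_ge0 => x _; rewrite lee_fin excess_ge0. Qed.

Section realization.
Context {R : realType} {n m : nat} {v : 'I_n -> R} {q : R}.

Local Notation M := (Mset v q).

Lemma card_blocks_gt0 : (0 < #|blocks m v q|)%N.
Proof. by rewrite cards_draws bin_gt0 geq_minr. Qed.

Lemma blocksP {B} : B \in blocks m v q -> B \subset M /\ #|B| = minn m #|M|.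
Proof. by rewrite inE => /andP[-> /eqP ->]. Qed.

Lemma block_full {B} : B \in blocks m v q -> (#|M| <= m)%N -> B = M.
Proof.
move=> /blocksP[BM cardB] Mm; apply/eqP; rewrite eqEcard BM /=.
by rewrite cardB (minn_idPr Mm).
Qed.

Lemma ge_avgB (g : {set 'I_n} -> R) c :
  (forall B, B \in blocks m v q -> c <= g B) -> c <= avgB m v q g.
Proof.
move=> cg; rewrite /avgB ler_pdivlMr ?ltr0n ?card_blocks_gt0 //.
by rewrite mulr_natr -sumr_const; apply: ler_sum.
Qed.

Lemma le_avgB (g : {set 'I_n} -> R) c :
  (forall B, B \in blocks m v q -> g B <= c) -> avgB m v q g <= c.
Proof.
move=> gc; rewrite /avgB ler_pdivrMr ?ltr0n ?card_blocks_gt0 //.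
by rewrite mulr_natr -sumr_const; apply: ler_sum.
Qed.

Lemma welfare_ge :
  q * (minn m #|M|)%:R + \sum_i excess q (v i) * (#|M :\ i| < m)%N%:R
    <= avgB m v q (welfare_of v).
Proof.
apply: ge_avgB => B blockB; have [BM cardB] := blocksP blockB.
have -> : welfare_of v B = \sum_(i in B) (q + excess q (v i)).
  apply: eq_bigr => i iB; rewrite add_excess //.
  by have := fintype.subsetP BM i iB; rewrite inE.
rewrite big_split /= sumr_const cardB mulr_natr lerD2l [leRHS]big_mkcond /=.
apply: ler_sum => i _; case: ifP => [_|iNB].
  by rewrite ler_piMr ?excess_ge0 // lern1 leq_b1.
have [iM|iNM] := boolP (i \in M); last first.
  by rewrite excess_eq0 ?mul0r // ltNge; move: iNM; rewrite inE.
case: ltnP => [Mim|]; last by rewrite mulr0.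
suff: B = M by move=> BE; move: iNB; rewrite BE iM.
by apply: block_full blockB _; rewrite (cardsD1 i M) iM.
Qed.

Lemma take_sum_le (s : seq R) k : 0 <= q ->
  \sum_(x <- take k s) x <= k%:R * q + \sum_(x <- s) excess q x.
Proof.
move=> q0; elim: s k => [|a s IH] [|k] /=.
- by rewrite !big_nil mul0r addr0.
- by rewrite !big_nil addr0 mulr_ge0.
- by rewrite big_nil mul0r add0r sumr_ge0 // => x _; exact: excess_ge0.
- rewrite !big_cons -addn1 natrD; have := IH k; have := le_add_excess q a; lra.
Qed.

Lemma top_sum_le : 0 <= q -> top_sum m v <= m%:R * q + \sum_i excess q (v i).
Proof.
move=> q0; apply: le_trans (take_sum_le _ _ q0) _; apply: lerD.
  by apply: ler_wpM2r => //; rewrite ler_nat geq_minl.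
rewrite (perm_big [seq v i | i <- enum 'I_n]) ?perm_sort //.
by rewrite big_map big_enum.
Qed.

Context {alpha delta : R}.
Hypotheses (m_gt0 : (0 < m)%N) (q_gt0 : 0 < q).
Hypotheses (alpha01 : 0 < alpha < 1) (delta_gt0 : 0 < delta).

Lemma avgB_T_TW_le : avgB m v q (T_TW m alpha delta v q)
  <= (1 - alpha) * q + alpha * (1 + delta) * q / m%:R * (minn m #|M|)%:R.
Proof.
have [alpha_gt0 alpha_lt1] := andP alpha01.
apply: le_avgB => B /blocksP[BM cardB]; rewrite /T_TW; case: ifP => Bm.
  have : \sum_(i in B) Num.min (v i) ((1 + delta) * q) <= #|B|%:R * ((1 + delta) * q).
    by rewrite mulr_natl -sumr_const; apply: ler_sum => i _; rewrite ge_min lexx orbT.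
  rewrite cardB => le_sum.
  have am_ge0 : 0 <= alpha / m%:R := divr_ge0 (ltW alpha_gt0) (ler0n _ _).
  by have := ler_wpM2l am_ge0 le_sum; lra.
have -> : minn m #|M| = m by move: Bm; rewrite cardB; lia.
by rewrite divfK ?pnatr_eq0 -?lt0n // addrC mulrA.
Qed.

Lemma avgB_T_TW_ge : (1 - alpha) * q + alpha * (1 + delta) * q * (m <= #|M|)%N%:R
  <= avgB m v q (T_TW m alpha delta v q).
Proof.
have [alpha_gt0 alpha_lt1] := andP alpha01.
apply: ge_avgB => B /blocksP[BM cardB]; rewrite /T_TW; case: ifP => Bm.
  have -> : (m <= #|M|)%N = false by move: Bm; rewrite cardB; lia.
  rewrite mulr0 addr0 lerDr; apply: mulr_ge0 (ltW alpha_gt0) (mulr_ge0 _ _).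
    by rewrite invr_ge0.
  apply: sumr_ge0 => i iB; have := fintype.subsetP BM i iB; rewrite inE => qvi.
  by rewrite le_min (le_trans (ltW q_gt0)) //= mulr_ge0 ?ltW // addr_gt0.
have -> : (m <= #|M|)%N = true by move: Bm; rewrite cardB; lia.
by rewrite mulr1; lra.
Qed.

End realization.

Section threshold_set.
Local Open Scope ereal_scope.
Context {R : realType} {d : measure_display} {T : measurableType d}.
Context {P : probability T R} {F : probability R R} {n : nat}.
Context {X : 'I_n -> T -> R} {q : R}.
Hypothesis iidX : iid_with P X F.

Local Notation M w := (Mset (X^~ w) q).

Let rectE (A : 'I_n -> set R) :
  [set w | forall j, A j (X j w)] = \bigcap_(j in [set: 'I_n]) (X j @^-1` A j).
Proof. by apply/seteqP; split => w /= Aw j; [move=> _|]; exact: Aw. Qed.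

Lemma measurable_rect (A : 'I_n -> set R) : (forall j, measurable (A j)) ->
  measurable [set w | forall j, A j (X j w)].
Proof.
move=> mA; rewrite rectE; apply: fin_bigcap_measurable => [|j _].
  exact: finite_finset.
by rewrite -[X in measurable X]setTI; apply: iidX.1.
Qed.

Lemma prob_rect (A : 'I_n -> set R) : (forall j, measurable (A j)) ->
  P [set w | forall j, A j (X j w)] = \prod_(j < n) F (A j).
Proof. by move=> mA; rewrite rectE; apply: iidX.2. Qed.

(* [side S j] is the set of values of bidder [j] that agree with [S] on whether
   [j] belongs to [M]; the event [M w = S] is the cylinder of these sets. *)
Definition side (S : {set 'I_n}) (j : 'I_n) : set R :=
  if j \in S then [set x | q <= x]%R else [set x | x < q]%R.

Lemma measurable_side S j : measurable (side S j).
Proof.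
rewrite /side; case: ifP => _; first by rewrite -set_itvcy; exact: measurable_itv.
by rewrite -set_itvNyo; exact: measurable_itv.
Qed.

Lemma sideP S j x : side S j x <-> (q <= x)%R = (j \in S).
Proof. by rewrite /side; case: (j \in S) => /=; [|rewrite ltNge]; case: (q <= x)%R. Qed.

Lemma side_MsetP w S : (forall j, side S j (X j w)) <-> M w = S.
Proof.
split=> [Sw|<- j]; last by apply/sideP; rewrite inE.
by apply/setP => j; rewrite inE; apply/sideP.
Qed.

Lemma measurable_Mset (Q : pred {set 'I_n}) : measurable [set w | Q (M w)].
Proof.
rewrite (_ : [set w | Q (M w)] =
    \bigcup_(S in [set S | Q S]) [set w | forall j, side S j (X j w)]).
  apply: fin_bigcup_measurable => [|S _]; first exact: finite_finset.
  by apply: measurable_rect => j; exact: measurable_side.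
apply/seteqP; split => w /= => [QMw|[S QS /side_MsetP ->//]].
by exists (M w) => //; apply/side_MsetP.
Qed.

Lemma measurable_fun_Mset (h : {set 'I_n} -> R) :
  measurable_fun setT (fun w => h (M w)).
Proof.
move=> _ Y mY; rewrite setTI.
rewrite (_ : _ @^-1` Y = [set w | `[< Y (h (M w)) >]]).
  exact: (measurable_Mset (fun S => `[< Y (h S) >])).
by apply/seteqP; split => w /asboolP.
Qed.

Let side_at (i : 'I_n) (B : set R) (S : {set 'I_n}) (j : 'I_n) : set R :=
  if j == i then B else side S j.

Let side_at_Mset {i B} {S : {set 'I_n}} {w : T} :
  i \notin S -> (forall j, side_at i B S j (X j w)) -> M w :\ i = S.
Proof.
move=> iS Sw; apply/setP => j; rewrite !inE; have [->|ji] /= := eqVneq j i.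
  by rewrite (negbTE iS).
by have := Sw j; rewrite /side_at (negbTE ji) => /sideP.
Qed.

Let measurable_side_at i B (S : {set 'I_n}) :
  measurable B -> forall j, measurable (side_at i B S j).
Proof. by move=> mB j; rewrite /side_at; case: eqP => _ //; exact: measurable_side. Qed.

(* Split the event along the value [S] of [M w :\ i]: each piece is a cylinder whose
   [i]-th side is [B]. *)
Let prob_value_Mset_rem (i : 'I_n) (Q : pred {set 'I_n}) (B : set R) :
  measurable B ->
  P (X i @^-1` B `&` [set w | Q (M w :\ i)]) =
  F B * \sum_(S \in [set S : {set 'I_n} | (i \notin S) && Q S])
          \prod_(j < n | j != i) F (side S j).
Proof.
move=> mB; set D := [set S : {set 'I_n} | (i \notin S) && Q S].
have -> : X i @^-1` B `&` [set w | Q (M w :\ i)] =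
    \bigcup_(S in D) [set w | forall j, side_at i B S j (X j w)].
  apply/seteqP; split => w /=.
  - move=> [Bw QMw]; exists (M w :\ i); first by rewrite /D /= setD11 QMw.
    move=> j; rewrite /side_at; case: eqP => [-> //|/eqP ji].
    by apply/sideP; rewrite !inE ji.
  - move=> [S /andP[iS QS] Sw]; split; first by have := Sw i; rewrite /side_at eqxx.
    by rewrite (side_at_Mset iS Sw).
rewrite measure_fin_bigcup //; last 3 first.
- exact: finite_finset.
- move=> S S' /andP[iS _] /andP[iS' _] [w [Sw S'w]].
  by rewrite -(side_at_Mset iS Sw) -(side_at_Mset iS' S'w).
- by move=> S _; apply: measurable_rect; exact: measurable_side_at.
rewrite ge0_mule_fsumr => [|S]; last by apply: prode_ge0 => j _.
apply: eq_fsbigr => S _.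
transitivity (\prod_(j < n) F (side_at i B S j)).
  by apply: prob_rect; exact: measurable_side_at.
rewrite (bigD1 i) //= /side_at eqxx; congr (_ * _).
by apply: eq_bigr => j ji; rewrite (negbTE ji).
Qed.

Lemma indep_value_Mset_rem (i : 'I_n) (Q : pred {set 'I_n}) (B : set R) :
  measurable B ->
  P (X i @^-1` B `&` [set w | Q (M w :\ i)]) = F B * P [set w | Q (M w :\ i)].
Proof.
move=> mB; rewrite prob_value_Mset_rem //; congr (_ * _).
rewrite -[in RHS](setTI [set w | Q (M w :\ i)]) -(preimage_setT (X i)).
by rewrite prob_value_Mset_rem // probability_setT mul1e.
Qed.

End threshold_set.

Section equilibrium.
Local Open Scope ereal_scope.
Context {R : realType} {d : measure_display} {T : measurableType d}.
Context {P : probability T R} {F : probability R R} {n m : nat}.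
Context {X : 'I_n -> T -> R} {alpha delta q : R}.
Hypotheses (m_gt0 : (0 < m)%N) (alpha01 : (0 < alpha < 1)%R).
Hypotheses (delta_gt0 : (0 < delta)%R) (q_gt0 : (0 < q)%R).
Hypothesis iidX : iid_with P X F.
Hypothesis equilibrium :
  \int[P]_w (avgB m (X^~ w) q (T_TW m alpha delta (X^~ w) q))%:E = q%:E.

Local Notation M w := (Mset (X^~ w) q).
Local Notation sold w := ((minn m #|M w|)%:R : R).
Local Notation saturated := [set w | (m <= #|M w|)%N].
Local Notation unsaturated i := [set w | (#|M w :\ i| < m)%N].

Let measurable_excess_X i : measurable_fun setT (fun w => excess q (X i w)).
Proof. exact: measurableT_comp (measurable_excess q) (iidX.1 i). Qed.

Let measurable_sold : measurable_fun setT (fun w => sold w) :=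
  measurable_fun_Mset iidX (fun S => (minn m #|S|)%:R).

Let measurable_saturated : measurable saturated :=
  measurable_Mset iidX (fun S => m <= #|S|)%N.

Let measurable_unsaturated i : measurable (unsaturated i) :=
  measurable_Mset iidX (fun S => #|S :\ i| < m)%N.

Lemma expect_sold_ge : (m%:R / (1 + delta))%:E <= \int[P]_w (sold w)%:E.
Proof.
have [alpha_gt0 alpha_lt1] := andP alpha01.
have sold_le : \int[P]_w (sold w)%:E <= m%:R%:E.
  apply: le_trans (le_integral_pointwise P _ (cst m%:R%:E) _) _.
    by move=> w; rewrite lee_fin ler_nat geq_minl.
  by rewrite integral_cst // [X in _ * X]probability_setT mule1.
have sold_fin : \int[P]_w (sold w)%:E \is a fin_num.
  by rewrite ge0_fin_numE ?(le_lt_trans sold_le) ?ltry ?integral_ge0.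
rewrite -(fineK sold_fin) lee_fin; set k := fine _.
have : q%:E <= ((1 - alpha) * q)%:E + (alpha * (1 + delta) * q / m%:R)%:E * k%:E.
  rewrite (fineK sold_fin) -integral_affine; first last.
  - exact: measurable_sold.
  - by move=> w.
  - by rewrite !mulr_ge0 ?invr_ge0 ?ltW ?addr_gt0 ?ltr0n.
  - by rewrite mulr_ge0 ?subr_ge0 ?ltW.
  rewrite -equilibrium; apply: le_integral_pointwise => w; rewrite lee_fin.
  exact: avgB_T_TW_le.
rewrite -EFinM -EFinD lee_fin => eq_le.
have : (alpha * q * m%:R <= alpha * q * ((1 + delta) * k))%R.
  have -> : (alpha * q * ((1 + delta) * k)
             = m%:R * (alpha * (1 + delta) * q / m%:R * k))%R.
    by field; rewrite pnatr_eq0 -lt0n.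
  by rewrite [leLHS]mulrC; apply: ler_wpM2l; [exact: ler0n | lra].
rewrite ler_pM2l ?mulr_gt0 // => le_m.
by rewrite ler_pdivrMr ?addr_gt0 // mulrC.
Qed.

Lemma prob_saturated_le : P saturated <= ((1 + delta)^-1)%:E.
Proof.
have [alpha_gt0 alpha_lt1] := andP alpha01.
have indicatorE : \int[P]_w ((m <= #|M w|)%N%:R)%:E = P saturated.
  rewrite -[in RHS](setIT saturated) -integral_indic //.
  by apply: eq_integral => w _; rewrite indicE in_setb.
have : ((1 - alpha) * q)%:E + (alpha * (1 + delta) * q)%:E * P saturated <= q%:E.
  rewrite -indicatorE -integral_affine; first last.
  - exact: (measurable_fun_Mset iidX (fun S => (m <= #|S|)%N%:R)).
  - by move=> w.
  - by rewrite !mulr_ge0 ?ltW ?addr_gt0.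
  - by rewrite mulr_ge0 ?subr_ge0 ?ltW.
  rewrite -equilibrium; apply: le_integral_pointwise => w; rewrite lee_fin.
  exact: avgB_T_TW_ge.
rewrite -(fineK (fin_num_measure P _ measurable_saturated)) -EFinM -EFinD !lee_fin.
set p := fine _ => le_q.
have : (alpha * q * ((1 + delta) * p) <= alpha * q * 1)%R by lra.
rewrite ler_pM2l ?mulr_gt0 // => le_p.
by rewrite -[leRHS]mulr1 ler_pdivlMl ?addr_gt0.
Qed.

Lemma prob_unsaturated_ge i : (delta / (1 + delta))%:E <= P (unsaturated i).
Proof.
have cover : unsaturated i `|` saturated = setT.
  apply/seteqP; split => // w _ /=; case: (leqP m #|M w|) => [|Mm]; [by right | left].
  by apply: leq_ltn_trans Mm; rewrite subset_leq_card // subsetDl.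
have : 1 <= P (unsaturated i) + ((1 + delta)^-1)%:E.
  apply: le_trans (leeD (lexx _) prob_saturated_le).
  have := measureU2 P (measurable_unsaturated i) measurable_saturated.
  by rewrite cover [X in X <= _]probability_setT.
rewrite -(fineK (fin_num_measure P _ (measurable_unsaturated i))) -EFinD !lee_fin.
have -> : (delta / (1 + delta) = 1 - (1 + delta)^-1)%R.
  by field; rewrite gt_eqF ?addr_gt0.
lra.
Qed.

Let expect_excess_on i (Q : pred {set 'I_n}) :
  \int[P]_(w in [set w | Q (M w :\ i)]) (excess q (X i w))%:E
    = P [set w | Q (M w :\ i)] * mean_excess F q.
Proof.
apply: (integral_indep P F (X i) _ (fun x => (excess q x)%:E)).
- exact: iidX.1.
- exact: (measurable_Mset iidX (fun S => Q (S :\ i))).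
- by apply/measurable_EFinP; exact: measurable_excess.
- by move=> x; rewrite lee_fin excess_ge0.
- by move=> A mA; apply: indep_value_Mset_rem.
Qed.

Lemma expect_excess i : \int[P]_w (excess q (X i w))%:E = mean_excess F q.
Proof.
have := expect_excess_on i xpredT.
by rewrite (_ : [set w | _] = setT) ?probability_setT ?mul1e //; apply/seteqP.
Qed.

Lemma expect_excess_unsaturated i :
  \int[P]_w (excess q (X i w) * (#|M w :\ i| < m)%N%:R)%:E
    = P (unsaturated i) * mean_excess F q.
Proof.
rewrite -(expect_excess_on i (fun S => #|S| < m)%N) [RHS]integral_mkcond.
apply: eq_integral => w _; rewrite /patch in_setb.
by case: (_ < m)%N; rewrite ?mulr1 ?mulr0.
Qed.

Lemma expect_welfare_ge :
  q%:E * \int[P]_w (sold w)%:E + \sum_(i < n) P (unsaturated i) * mean_excess F q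
    <= \int[P]_w (avgB m (X^~ w) q (welfare_of (X^~ w)))%:E.
Proof.
apply: (le_trans _ (le_integral_pointwise P (fun w =>
  (q * sold w + \sum_i excess q (X i w) * (#|M w :\ i| < m)%N%:R)%R%:E) _ _)); last first.
  by move=> w; rewrite lee_fin; exact: welfare_ge.
rewrite ge0_integralD_sum; last 4 first.
- by move=> w; apply: mulr_ge0 (ltW q_gt0) (ler0n _ _).
- exact: measurable_funM.
- by move=> i w; rewrite mulr_ge0 ?excess_ge0.
- move=> i; apply: measurable_funM; first exact: measurable_excess_X.
  exact: measurable_fun_Mset iidX (fun S => (#|S :\ i| < m)%N%:R).
under eq_integral do rewrite EFinM.
rewrite ge0_integralZl_EFin //; last exact: ltW.
- by rewrite (eq_bigr _ (fun i _ => expect_excess_unsaturated i)).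
- exact/measurable_EFinP.
Qed.

Lemma expect_top_sum_le :
  \int[P]_w (top_sum m (X^~ w))%:E <= (m%:R * q)%:E + \sum_(i < n) mean_excess F q.
Proof.
apply: (le_trans (le_integral_pointwise P _
  (fun w => (m%:R * q + \sum_i excess q (X i w))%R%:E) _)).
  by move=> w; rewrite lee_fin; apply: top_sum_le; exact: ltW.
rewrite (ge0_integralD_sum P _ _ (fun=> m%:R * q)%R) //; last 2 first.
- by move=> _; apply: mulr_ge0 (ler0n _ _) (ltW q_gt0).
- by move=> i w; exact: excess_ge0.
rewrite integral_cst // [X in _ * X]probability_setT mule1.
by rewrite (eq_bigr _ (fun i _ => expect_excess i)).
Qed.

End equilibrium.

Lemma approx_ratio_le {R : realFieldType} {delta : R} : 0 < delta ->
  Num.min 1 delta / (2 * (1 + delta)) <= (1 + delta)^-1 /\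
  Num.min 1 delta / (2 * (1 + delta)) <= delta / (1 + delta).
Proof.
move=> delta_gt0; have delta1_gt0 : 0 < 1 + delta by rewrite addr_gt0.
set mu := Num.min 1 delta / (1 + delta).
have mu_ge0 : 0 <= mu by rewrite divr_ge0 ?le_min ?ler01 ?ltW.
have -> : Num.min 1 delta / (2 * (1 + delta)) = mu / 2.
  by rewrite /mu; field; rewrite gt_eqF.
have half_le : mu / 2 <= mu by lra.
have inv_ge0 : 0 <= (1 + delta)^-1 by rewrite invr_ge0 ltW.
split; apply: le_trans half_le _.
- by rewrite -[leRHS]mul1r ler_wpM2r // ge_min lexx.
- by rewrite ler_wpM2r // ge_min lexx orbT.
Qed.

Theorem mainTheorem11 (R : realType) (d : measure_display) (T : measurableType d)
  (P : probability T R) (F : probability R R) (n m : nat)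
  (X : 'I_n -> T -> R) (alpha delta q : R) :
  (0 < m)%N ->
  0 < alpha < 1 -> 0 < delta ->
  F `[0, +oo[%classic = 1%E ->
  iid_with P X F ->
  0 < q ->
  (\int[P]_w (avgB m (fun i => X i w) q (T_TW m alpha delta (fun i => X i w) q))%:E
     = q%:E)%E ->
  (((Num.min 1 delta) / (2 * (1 + delta)))%:E * \int[P]_w (top_sum m (fun i => X i w))%:E
     <= \int[P]_w (avgB m (fun i => X i w) q (welfare_of (fun i => X i w)))%:E)%E.
Proof.
move=> m_gt0 alpha01 delta_gt0 _ iidX q_gt0 equilibrium.
have [c_le_inv c_le_frac] := approx_ratio_le delta_gt0.
have c_ge0 : 0 <= Num.min 1 delta / (2 * (1 + delta)).
  by rewrite divr_ge0 ?mulr_ge0 ?le_min ?ler01 ?addr_ge0 ?ltW.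
apply: le_trans (lee_wpmul2l _ (expect_top_sum_le q_gt0 iidX)) _; first by rewrite lee_fin.
apply: le_trans _ (expect_welfare_ge q_gt0 iidX).
rewrite ge0_muleDr ?ge0_sume_distrr; last 3 first.
- by move=> i _; exact: mean_excess_ge0.
- by rewrite lee_fin mulr_ge0 ?ler0n ?ltW.
- by apply: sume_ge0 => i _; exact: mean_excess_ge0.
apply: leeD.
- rewrite -EFinM (mulrC _ q) mulrCA EFinM.
  apply: lee_wpmul2l; first by rewrite lee_fin ltW.
  apply: le_trans (expect_sold_ge m_gt0 alpha01 delta_gt0 q_gt0 iidX equilibrium).
  by rewrite lee_fin mulrC ler_wpM2l.
- apply: lee_sum => i _; apply: lee_wpmul2r; first exact: mean_excess_ge0.
  apply: le_trans (prob_unsaturated_ge m_gt0 alpha01 delta_gt0 q_gt0 iidX equilibrium i).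
  by rewrite lee_fin.
Qed.
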